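(* In the calculus described in the context, for every well-typed expression $e:A\leadsto B$ (in which every user-defined operation carries a consistent incrementalization, and every occurrence of $+$ is at a type $A$ with $[\![A]\!]=[\![A]\!]'$ and with $\oplus$ associative and commutative on $[\![A]\!]$), the triple $(C_e,i_e,d_e)$ produced by the incrementalization transformation is a value preserving incrementalization of $[\![e]\!]$: for all $x\in[\![A]\!]$ and all finite lists $xs'$ of changes in $[\![A]\!]'$, $(\mathsf{iter}\,(C_e,i_e,d_e)\,x\,xs')_1=[\![e]\!](\mathsf{sum}\,x\,xs')$.
   Context: Fix a container: a type $S$ of shapes and for each $s:S$ an index type $\mathrm{Pos}(s)$ with decidable equality. Fix a base change structure $(\beta,\beta',\oplus,\ominus)$ with $x\oplus(y\ominus x)=y$. Object types: $A,B::=\mathsf{b}\mid F_sA\mid A\times B\mid A+B$. Value/change types with $\oplus,\ominus$: $[\![\mathsf b]\!]=\beta$, $[\![\mathsf b]\!]'=\beta'$; $[\![F_sA]\!]=\mathrm{Pos}(s)\to[\![A]\!]$, $[\![F_sA]\!]'=\mathrm{Pos}(s)\to[\![A]\!]'$ (pointwise); products componentwise; $[\![A+B]\!]=[\![A]\!]+[\![B]\!]$ ($\iota_1,\iota_2$), $[\![A+B]\!]'$ with constructors $\mathsf{cl}\,a',\mathsf{cr}\,b',\mathsf{sl}\,a,\mathsf{sr}\,b,\mathsf{null}$, where $\iota_1x\oplus\mathsf{cl}x'=\iota_1(x\oplus x')$, $\iota_1x\oplus\mathsf{cr}y'=\iota_1x$, $\iota_2y\oplus\mathsf{cl}x'=\iota_2y$,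 $\iota_2y\oplus\mathsf{cr}y'=\iota_2(y\oplus y')$, $z\oplus\mathsf{sl}x=\iota_1x$, $z\oplus\mathsf{sr}y=\iota_2y$, $z\oplus\mathsf{null}=z$; $\iota_1x\ominus\iota_1y=\mathsf{cl}(x\ominus y)$, $\iota_1x\ominus\iota_2y=\mathsf{sl}x$, $\iota_2x\ominus\iota_1y=\mathsf{sr}x$, $\iota_2x\ominus\iota_2y=\mathsf{cr}(x\ominus y)$. An incrementalization of $f:[\![A]\!]\to[\![B]\!]$ is $(C,i,d)$ with $i:[\![A]\!]\to[\![B]\!]\times C$, $d:[\![A]\!]'\to C\to[\![B]\!]'\times C$; it is consistent if $(i\,x)_1=f\,x$, $f(x\oplus x')=f\,x\oplus(d\,x'(i\,x)_2)_1$, $(i(x\oplus x'))_2=(d\,x'(i\,x)_2)_2$. A user-defined operation $o:\mathsf{Op}\,A\,B$ is a function $f_o$ with a consistent incrementalization of $f_o$. Define $\mathsf{iter}\,(C,i,d)\,x\,[\,]=i\,x$, $\mathsf{iter}\,(C,i,d)\,x\,(x'::xs')=(y\oplus y',c_2)$ where $(y,c_1)=\mathsf{iter}\,(C,i,d)\,x\,xs'$, $(y',c_2)=d\,x'\,c_1$; $\mathsf{sum}\,x\,[\,]=x$, $\mathsf{sum}\,x\,(x'::xs')=(\mathsf{sum}\,x\,xs')\oplus x'$. Expressions, typing and denotation ($i:\mathrm{Pos}(s)$; $r:\mathrm{Pos}(s_2)\to\mathrm{Pos}(s_1)$; $p:\mathrm{Pos}(s)\to\mathbb B$; $c\in[\![A]\!]$):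 $e_1;e_2$ (composition, $[\![e_2]\!]\circ[\![e_1]\!]$); $e_1\times e_2:A\times C\leadsto B\times D$ (componentwise); $\mathsf{id}$; $\mathsf{dup}:A\leadsto A\times A$, $x\mapsto(x,x)$; $\mathsf{fst},\mathsf{snd}$; $\mathsf{cst}\,c:B\leadsto A$, $x\mapsto c$; $+:A\times A\leadsto A$, $(x,y)\mapsto x\oplus y$ (only when $[\![A]\!]=[\![A]\!]'$); $\mathsf{op}\,o:A\leadsto B$ denoting $f_o$; $\mathsf{map}\,e:F_sA\leadsto F_sB$, $x\mapsto\lambda i.[\![e]\!](x\,i)$; $\mathsf{zip}:F_sA\times F_sB\leadsto F_s(A\times B)$, $(x,y)\mapsto\lambda i.(x\,i,y\,i)$; $\mathsf{get}\,i:F_sA\leadsto A$, $x\mapsto x\,i$; $\mathsf{set}\,i:A\times F_sA\leadsto F_sA$, $(x,a)\mapsto\lambda j.\,\mathsf{if}\ i=j\ \mathsf{then}\ x\ \mathsf{else}\ a\,j$; $\mathsf{reshape}\,r:F_{s_1}A\leadsto F_{s_2}A$, $x\mapsto\lambda i.x(r\,i)$; $\mathsf{replicate}\,s:A\leadsto F_sA$, $x\mapsto\lambda i.x$; $\mathsf{tp}:F_{s_1}(F_{s_2}A)\leadsto F_{s_2}(F_{s_1}A)$, $x\mapsto\lambda i\lambda j.x\,j\,i$; $\mathsf{filter}\,p:A\times F_sA\leadsto F_sA$, $(x,a)\mapsto\lambda i.\,\mathsf{if}\ p\,i\ \mathsf{then}\ a\,i\ \mathsf{else}\ x$; $\mathsf{inl},\mathsf{inr}$;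 $\mathsf{fuse}:A+A\leadsto A$, $\iota_kx\mapsto x$; $\mathsf{distr}:A\times(B+C)\leadsto A\times B+A\times C$, $(x,\iota_ky)\mapsto\iota_k(x,y)$; $e_1\|e_2:A+C\leadsto B+D$, $\iota_1x\mapsto\iota_1([\![e_1]\!]x)$, $\iota_2x\mapsto\iota_2([\![e_2]\!]x)$. Incrementalization transformation $e\mapsto(C_e,i_e,d_e)$: • $e\in\{\mathsf{id},\mathsf{dup},\mathsf{fst},\mathsf{snd},\mathsf{zip},\mathsf{tp},\mathsf{get}\,i,\mathsf{set}\,i,\mathsf{reshape}\,r,\mathsf{replicate}\,s,\mathsf{filter}\,p\}$: $C_e=\mathsf{Unit}$, $i_ex=([\![e]\!]x,\star)$, $d_ex'\star=(e\text{'s defining equation applied to the change }x',\star)$. $\mathsf{inl}/\mathsf{inr}$: $C=\mathsf{Unit}$, $i\,x=(\iota_kx,\star)$, derivatives $x'\mapsto\mathsf{cl}\,x'$, resp. $y'\mapsto\mathsf{cr}\,y'$. • $\mathsf{cst}\,c$: $C=\mathsf{Unit}$, $i\,x=(c,\star)$, $d\,x'\star=(c\ominus c,\star)$. $+$: $C=\mathsf{Unit}$, $i(x,y)=(x\oplus y,\star)$, $d(x',y')\star=(x'\oplus y',\star)$. $\mathsf{op}\,o$: the given incrementalization. • $f;g$: $C=C_f\times C_g$; $i\,x=(z,(c_1,c_2))$, $(y,c_1)=i_fx$, $(z,c_2)=i_gy$; $d\,x'(c_1,c_2)=(z',(c_1',c_2'))$, $(y',c_1')=d_fx'c_1$, $(z',c_2')=d_gy'c_2$.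 • $f\times g$: $C=C_f\times C_g$, initialization and derivative computed componentwise from those of $f$ and $g$. • $\mathsf{map}_sf$: $C=\mathrm{Pos}(s)\to C_f$, $i\,x=(\lambda j.(i_f(xj))_1,\lambda j.(i_f(xj))_2)$, $d\,x'c=(\lambda j.(d_f(x'j)(cj))_1,\lambda j.(d_f(x'j)(cj))_2)$. • $\mathsf{fuse}$: $C=[\![A]\!]+[\![A]\!]$, $i(\iota_kx)=(x,\iota_kx)$; $d(\mathsf{cl}x')(\iota_1x)=(x',\iota_1(x\oplus x'))$, $d(\mathsf{cr}y')(\iota_1x)=(x\ominus x,\iota_1x)$, $d(\mathsf{cl}x')(\iota_2y)=(y\ominus y,\iota_2y)$, $d(\mathsf{cr}y')(\iota_2y)=(y',\iota_2(y\oplus y'))$, $d(\mathsf{sl}x)(\iota_kx_0)=(x\ominus x_0,\iota_1x)$, $d(\mathsf{sr}y)(\iota_ky_0)=(y\ominus y_0,\iota_2y)$, $d\,\mathsf{null}(\iota_kx)=(x\ominus x,\iota_kx)$. • $\mathsf{distr}$: $C=[\![A]\!]\times([\![B]\!]+[\![C]\!])$, $i(x,\iota_ky)=(\iota_k(x,y),(x,\iota_ky))$; $d(x',\mathsf{cl}y')(x,\iota_1y)=(\mathsf{cl}(x',y'),(x\oplus x',\iota_1(y\oplus y')))$; $d(x',\mathsf{cr}y')(x,\iota_1y)=(\mathsf{cl}(x',y\ominus y),(x\oplus x',\iota_1y))$; $d(x',\mathsf{cl}y')(x,\iota_2y)=(\mathsf{cr}(x',y\ominus y),(x\oplus x',\iota_2y))$;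 $d(x',\mathsf{cr}y')(x,\iota_2y)=(\mathsf{cr}(x',y'),(x\oplus x',\iota_2(y\oplus y')))$; $d(x',\mathsf{sl}y)(x,\_)=(\mathsf{sl}(x\oplus x',y),(x\oplus x',\iota_1y))$; $d(x',\mathsf{sr}y)(x,\_)=(\mathsf{sr}(x\oplus x',y),(x\oplus x',\iota_2y))$; $d(x',\mathsf{null})(x,\iota_1y)=(\mathsf{cl}(x',y\ominus y),(x\oplus x',\iota_1y))$; $d(x',\mathsf{null})(x,\iota_2y)=(\mathsf{cr}(x',y\ominus y),(x\oplus x',\iota_2y))$. • $f\|g$ ($f:A_1\leadsto B_1,g:A_2\leadsto B_2$): $C=C_f\times[\![B_1]\!]+C_g\times[\![B_2]\!]$; $i(\iota_1x)=(\iota_1y,\iota_1(c,y))$ with $(y,c)=i_fx$ (analogously $\iota_2$, $g$); $d(\mathsf{cl}x')(\iota_1(c,y))=(\mathsf{cl}y',\iota_1(c',y\oplus y'))$, $(y',c')=d_fx'c$; $d(\mathsf{cr}x')(\iota_1(c,y))=(\mathsf{null},\iota_1(c,y))$; $d(\mathsf{cl}x')(\iota_2(c,y))=(\mathsf{null},\iota_2(c,y))$; $d(\mathsf{cr}x')(\iota_2(c,y))=(\mathsf{cr}y',\iota_2(c',y\oplus y'))$, $(y',c')=d_gx'c$; with $(y,c)=i_fx$: $d(\mathsf{sl}x)(\iota_1(c_0,y_0))=(\mathsf{cl}(y\ominus y_0),\iota_1(c,y))$, $d(\mathsf{sl}x)(\iota_2\_)=(\mathsf{sl}y,\iota_1(c,y))$;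 with $(y,c)=i_gx$: $d(\mathsf{sr}x)(\iota_1\_)=(\mathsf{sr}y,\iota_2(c,y))$, $d(\mathsf{sr}x)(\iota_2(c_0,y_0))=(\mathsf{cr}(y\ominus y_0),\iota_2(c,y))$; $d\,\mathsf{null}\,z=(\mathsf{null},z)$. *)

From Stdlib Require Import List.
Record container := {
  shape : Type;
  pos : shape -> Type;
  pos_eqdec : forall (s : shape) (i j : pos s), {i = j} + {i <> j}
}.

Record bcs := {
  bval : Type;
  bchg : Type;
  boplus : bval -> bchg -> bval;
  bominus : bval -> bval -> bchg;
  boplus_ominus : forall x y : bval, boplus x (bominus y x) = y
}.

Inductive schg (X X' Y Y' : Type) : Type :=
| cl (x' : X') | cr (y' : Y') | sl (x : X) | sr (y : Y) | snull.
Arguments cl {X X' Y Y'} x'.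
Arguments cr {X X' Y Y'} y'.
Arguments sl {X X' Y Y'} x.
Arguments sr {X X' Y Y'} y.
Arguments snull {X X' Y Y'}.

Section Calculus.
Variable K : container.
Variable BC : bcs.

Inductive ty : Type :=
| tb : ty
| tF : shape K -> ty -> ty
| tprod : ty -> ty -> ty
| tsum : ty -> ty -> ty.

Fixpoint val (A : ty) : Type :=
  match A with
  | tb => bval BC
  | tF s A => pos K s -> val A
  | tprod A B => (val A * val B)%type
  | tsum A B => (val A + val B)%type
  end.

Fixpoint chg (A : ty) : Type :=
  match A with
  | tb => bchg BC
  | tF s A => pos K s -> chg A
  | tprod A B => (chg A * chg B)%type
  | tsum A B => schg (val A) (chg A) (val B) (chg B)
  end.

Fixpoint oplus (A : ty) : val A -> chg A -> val A :=
  match A return val A -> chg A -> val A with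
  | tb => boplus BC
  | tF s A => fun x x' i => oplus A (x i) (x' i)
  | tprod A B => fun x x' => (oplus A (fst x) (fst x'), oplus B (snd x) (snd x'))
  | tsum A B => fun z z' =>
      match z, z' with
      | inl x, cl x' => inl (oplus A x x')
      | inl x, cr _ => inl x
      | inr y, cl _ => inr y
      | inr y, cr y' => inr (oplus B y y')
      | _, sl x => inl x
      | _, sr y => inr y
      | z, snull => z
      end
  end.

Fixpoint ominus (A : ty) : val A -> val A -> chg A :=
  match A return val A -> val A -> chg A with
  | tb => bominus BC
  | tF s A => fun x y i => ominus A (x i) (y i)
  | tprod A B => fun x y => (ominus A (fst x) (fst y), ominus B (snd x) (snd y))
  | tsum A B => fun z w =>
      match z, w with
      | inl x, inl y => cl (ominus A x y)
      | inl x, inr _ => sl x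
      | inr x, inl _ => sr x
      | inr x, inr y => cr (ominus B x y)
      end
  end.

Arguments oplus {A}.
Arguments ominus {A}.

Record incr (A B : ty) := {
  Cache : Type;
  ini : val A -> val B * Cache;
  der : chg A -> Cache -> chg B * Cache
}.
Arguments Cache {A B} i.
Arguments ini {A B} i _.
Arguments der {A B} i _ _.
Arguments Build_incr {A B} Cache ini der.

Definition consistent (A B : ty) (f : val A -> val B) (I : incr A B) : Prop :=
  (forall x, fst (ini I x) = f x) /\
  (forall x x', f (oplus x x') = oplus (f x) (fst (der I x' (snd (ini I x))))) /\
  (forall x x', snd (ini I (oplus x x')) = snd (der I x' (snd (ini I x)))).

Record Op (A B : ty) := {
  op_fun : val A -> val B;
  op_incr : incr A B;
  op_consistent : consistent A B op_fun op_incr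
}.
Arguments op_fun {A B} o _.
Arguments op_incr {A B} o.
Arguments consistent {A B} f I.


Definition to_chg (A : ty) (H : val A = chg A) (y : val A) : chg A :=
  eq_rect (val A) (fun T : Type => T) y (chg A) H.
Definition to_val (A : ty) (H : val A = chg A) (y : chg A) : val A :=
  eq_rect (chg A) (fun T : Type => T) y (val A) (eq_sym H).
Arguments to_chg {A} H y.
Arguments to_val {A} H y.

Inductive expr : ty -> ty -> Type :=
| ecomp A B C : expr A B -> expr B C -> expr A C
| epar A B C D : expr A B -> expr C D -> expr (tprod A C) (tprod B D)
| eid A : expr A A
| edup A : expr A (tprod A A)
| efst A B : expr (tprod A B) A
| esnd A B : expr (tprod A B) B
| ecst A B (c : val A) : expr B A
| eplus A (H : val A = chg A) : expr (tprod A A) A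
| eop A B (o : Op A B) : expr A B
| emap s A B : expr A B -> expr (tF s A) (tF s B)
| ezip s A B : expr (tprod (tF s A) (tF s B)) (tF s (tprod A B))
| eget s (i : pos K s) A : expr (tF s A) A
| eset s (i : pos K s) A : expr (tprod A (tF s A)) (tF s A)
| ereshape s1 s2 (r : pos K s2 -> pos K s1) A : expr (tF s1 A) (tF s2 A)
| ereplicate s A : expr A (tF s A)
| etp s1 s2 A : expr (tF s1 (tF s2 A)) (tF s2 (tF s1 A))
| efilter s (p : pos K s -> bool) A : expr (tprod A (tF s A)) (tF s A)
| einl A B : expr A (tsum A B)
| einr A B : expr B (tsum A B)
| efuse A : expr (tsum A A) A
| edistr A B C : expr (tprod A (tsum B C)) (tsum (tprod A B) (tprod A C))
| ealt A B C D : expr A B -> expr C D -> expr (tsum A C) (tsum B D).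
Arguments ecomp {A B C}. Arguments epar {A B C D}. Arguments ecst {A B}.
Arguments eplus {A}. Arguments eop {A B}. Arguments emap s {A B}.
Arguments eget {s} i A. Arguments eset {s} i A.
Arguments ereshape {s1 s2} r A. Arguments efilter {s} p A. Arguments ealt {A B C D}.

Fixpoint den (A B : ty) (e : expr A B) : val A -> val B :=
  match e in expr A B return val A -> val B with
  | ecomp e1 e2 => fun x => den _ _ e2 (den _ _ e1 x)
  | epar e1 e2 => fun x => (den _ _ e1 (fst x), den _ _ e2 (snd x))
  | eid _ => fun x => x
  | edup _ => fun x => (x, x)
  | efst _ _ => fun x => fst x
  | esnd _ _ => fun x => snd x
  | ecst c => fun _ => c
  | eplus H => fun x => oplus (fst x) (to_chg H (snd x))
  | eop o => op_fun o
  | emap s e1 => fun x i => den _ _ e1 (x i)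
  | ezip _ _ _ => fun x i => (fst x i, snd x i)
  | eget i _ => fun x => x i
  | eset i _ => fun x j => if pos_eqdec K _ i j then fst x else snd x j
  | ereshape r _ => fun x i => x (r i)
  | ereplicate _ _ => fun x _ => x
  | etp _ _ _ => fun x i j => x j i
  | efilter p _ => fun x i => if p i then snd x i else fst x
  | einl _ _ => fun x => inl x
  | einr _ _ => fun x => inr x
  | efuse _ => fun z => match z with inl x => x | inr x => x end
  | edistr _ _ _ => fun x =>
      match snd x with inl y => inl (fst x, y) | inr y => inr (fst x, y) end
  | ealt e1 e2 => fun z =>
      match z with inl x => inl (den _ _ e1 x) | inr x => inr (den _ _ e2 x) end
  end.

Definition unit_incr (A B : ty) (f : val A -> val B) (f' : chg A -> chg B) : incr A B :=
  @Build_incr A B (unit)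
      (fun x : val A => (f x, tt))
      (fun (x' : chg A) (_ : unit) => (f' x', tt)).

Fixpoint incr_of (A B : ty) (e : expr A B) : incr A B :=
  match e in expr A B return incr A B with
  | @ecomp A B C f g =>
      let If := incr_of _ _ f in let Ig := incr_of _ _ g in
      @Build_incr A C ((Cache If * Cache Ig)%type)
      (fun x : val A => let (y, c1) := ini If x in let (z, c2) := ini Ig y in (z, (c1, c2)))
      (fun (x' : chg A) (c : Cache If * Cache Ig) => let (y', c1') := der If x' (fst c) in
                            let (z', c2') := der Ig y' (snd c) in (z', (c1', c2')))
  | @epar A B C D f g =>
      let If := incr_of _ _ f in let Ig := incr_of _ _ g in
      @Build_incr (tprod A C) (tprod B D) ((Cache If * Cache Ig)%type)
      (fun x : val (tprod A C) => let (y1, c1) := ini If (fst x) in let (y2, c2) := ini Ig (snd x) in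
                         ((y1, y2), (c1, c2)))
      (fun (x' : chg (tprod A C)) (c : Cache If * Cache Ig) => let (y1', c1') := der If (fst x') (fst c) in
                            let (y2', c2') := der Ig (snd x') (snd c) in
                            ((y1', y2'), (c1', c2')))
  | eid A => @unit_incr A A (fun x => x) (fun x' => x')
  | edup A => @unit_incr A (tprod A A) (fun x => (x, x)) (fun x' => (x', x'))
  | efst A B => @unit_incr (tprod A B) A (fun x => fst x) (fun x' => fst x')
  | esnd A B => @unit_incr (tprod A B) B (fun x => snd x) (fun x' => snd x')
  | @ecst A B c => @Build_incr B A (unit)
      (fun _ : val B => (c, tt))
      (fun (_ : chg B) (_ : unit) => (ominus c c, tt))
  | @eplus A H => @Build_incr (tprod A A) A (unit)
      (fun x : val (tprod A A) => (oplus (fst x) (to_chg H (snd x)), tt))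
      (fun (x' : chg (tprod A A)) (_ : unit) =>
                       (to_chg H (oplus (to_val H (fst x')) (snd x')), tt))
  | eop o => op_incr o
  | @emap s A B f =>
      let If := incr_of _ _ f in
      @Build_incr (tF s A) (tF s B) (pos K s -> Cache If)
      (fun x : val (tF s A) => (fun j => fst (ini If (x j)), fun j => snd (ini If (x j))))
      (fun (x' : chg (tF s A)) (c : pos K s -> Cache If) => (fun j => fst (der If (x' j) (c j)),
                             fun j => snd (der If (x' j) (c j))))
  | @ezip s A B => @unit_incr (tprod (tF s A) (tF s B)) (tF s (tprod A B))
                     (fun x i => (fst x i, snd x i)) (fun x' i => (fst x' i, snd x' i))
  | @eget s i A => @unit_incr (tF s A) A (fun x => x i) (fun x' => x' i)
  | @eset s i A => @unit_incr (tprod A (tF s A)) (tF s A)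
                     (fun x j => if pos_eqdec K _ i j then fst x else snd x j)
                     (fun x' j => if pos_eqdec K _ i j then fst x' else snd x' j)
  | @ereshape s1 s2 r A => @unit_incr (tF s1 A) (tF s2 A)
                     (fun x i => x (r i)) (fun x' i => x' (r i))
  | @ereplicate s A => @unit_incr A (tF s A) (fun x _ => x) (fun x' _ => x')
  | @etp s1 s2 A => @unit_incr (tF s1 (tF s2 A)) (tF s2 (tF s1 A))
                     (fun x i j => x j i) (fun x' i j => x' j i)
  | @efilter s p A => @unit_incr (tprod A (tF s A)) (tF s A)
                     (fun x i => if p i then snd x i else fst x)
                     (fun x' i => if p i then snd x' i else fst x')
  | @einl A B => @unit_incr A (tsum A B) (fun x => inl x) (fun x' => cl x')
  | @einr A B => @unit_incr B (tsum A B) (fun x => inr x) (fun y' => cr y')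
  | @efuse A =>
      @Build_incr (tsum A A) A ((val A + val A)%type)
      (fun z : val (tsum A A) => match z with inl x => (x, inl x) | inr x => (x, inr x) end)
      (fun (z' : chg (tsum A A)) (c : val A + val A) =>
           match z', c with
           | cl x', inl x => (x', inl (oplus x x'))
           | cr _, inl x => (ominus x x, inl x)
           | cl _, inr y => (ominus y y, inr y)
           | cr y', inr y => (y', inr (oplus y y'))
           | sl x, inl x0 => (ominus x x0, inl x)
           | sl x, inr x0 => (ominus x x0, inl x)
           | sr y, inl y0 => (ominus y y0, inr y)
           | sr y, inr y0 => (ominus y y0, inr y)
           | snull, inl x => (ominus x x, inl x)
           | snull, inr x => (ominus x x, inr x)
           end)
  | @edistr A B C =>
      @Build_incr (tprod A (tsum B C)) (tsum (tprod A B) (tprod A C)) ((val A * (val B + val C))%type)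
      (fun p : val (tprod A (tsum B C)) => match snd p with
                         | inl y => (inl (fst p, y), (fst p, inl y))
                         | inr y => (inr (fst p, y), (fst p, inr y)) end)
      (fun (p' : chg (tprod A (tsum B C))) (c : val A * (val B + val C)) =>
           let x' := fst p' in let x := fst c in
           match snd p', snd c with
           | cl y', inl y => (cl (x', y'), (oplus x x', inl (oplus y y')))
           | cr _, inl y => (cl (x', ominus y y), (oplus x x', inl y))
           | cl _, inr y => (cr (x', ominus y y), (oplus x x', inr y))
           | cr y', inr y => (cr (x', y'), (oplus x x', inr (oplus y y')))
           | sl y, _ => (sl (oplus x x', y), (oplus x x', inl y))
           | sr y, _ => (sr (oplus x x', y), (oplus x x', inr y))
           | snull, inl y => (cl (x', ominus y y), (oplus x x', inl y))
           | snull, inr y => (cr (x', ominus y y), (oplus x x', inr y))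
           end)
  | @ealt A1 B1 A2 B2 f g =>
      let If := incr_of _ _ f in let Ig := incr_of _ _ g in
      @Build_incr (tsum A1 A2) (tsum B1 B2) (((Cache If * val B1) + (Cache Ig * val B2))%type)
      (fun z : val (tsum A1 A2) => match z with
                         | inl x => let (y, c) := ini If x in (inl y, inl (c, y))
                         | inr x => let (y, c) := ini Ig x in (inr y, inr (c, y)) end)
      (fun (z' : chg (tsum A1 A2)) (cz : (Cache If * val B1) + (Cache Ig * val B2)) =>
           match z', cz with
           | cl x', inl (c, y) => let (y', c') := der If x' c in (cl y', inl (c', oplus y y'))
           | cr _, inl (c, y) => (snull, inl (c, y))
           | cl _, inr (c, y) => (snull, inr (c, y))
           | cr x', inr (c, y) => let (y', c') := der Ig x' c in (cr y', inr (c', oplus y y'))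
           | sl x, inl (c0, y0) => let (y, c) := ini If x in (cl (ominus y y0), inl (c, y))
           | sl x, inr _ => let (y, c) := ini If x in (sl y, inl (c, y))
           | sr x, inl _ => let (y, c) := ini Ig x in (sr y, inr (c, y))
           | sr x, inr (c0, y0) => let (y, c) := ini Ig x in (cr (ominus y y0), inr (c, y))
           | snull, z => (snull, z)
           end)
  end.

(* Side condition: every occurrence of + is at a type A with [[A]] = [[A]]'
   (built into the constructor eplus) and with (+) associative and commutative on [[A]]. *)
Fixpoint wf (A B : ty) (e : expr A B) : Prop :=
  match e with
  | ecomp e1 e2 => wf _ _ e1 /\ wf _ _ e2
  | epar e1 e2 => wf _ _ e1 /\ wf _ _ e2
  | emap _ e1 => wf _ _ e1
  | ealt e1 e2 => wf _ _ e1 /\ wf _ _ e2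
  | @eplus A H =>
      (forall x y z : val A,
          oplus (oplus x (to_chg H y)) (to_chg H z) = oplus x (to_chg H (oplus y (to_chg H z)))) /\
      (forall x y : val A, oplus x (to_chg H y) = oplus y (to_chg H x))
  | _ => True
  end.

Fixpoint iter (A B : ty) (I : incr A B) (x : val A) (xs : list (chg A)) : val B * Cache I :=
  match xs with
  | nil => ini I x
  | x' :: xs' =>
      let (y, c1) := iter _ _ I x xs' in
      let (y', c2) := der I x' c1 in (oplus y y', c2)
  end.

Fixpoint sum (A : ty) (x : val A) (xs : list (chg A)) : val A :=
  match xs with
  | nil => x
  | x' :: xs' => oplus (sum _ x xs') x'
  end.

Arguments den {A B} e _.
Arguments incr_of {A B} e.
Arguments wf {A B} e.
Arguments iter {A B} I x xs.
Arguments sum {A} x xs.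
Arguments unit_incr {A B} f f'.

End Calculus.

Arguments val {K} BC A.
Arguments chg {K} BC A.
Arguments oplus {K BC A} _ _.
Arguments ominus {K BC A} _ _.
Arguments expr {K} BC _ _.
Arguments den {K BC A B} e _.
Arguments incr_of {K BC A B} e.
Arguments wf {K BC A B} e.
Arguments iter {K BC A B} I x xs.
Arguments sum {K BC A} x xs.

(** The transformation is compositional, and every construction preserves
    consistency, so [incr_of e] is a consistent incrementalization of [den e].
    Consistency says exactly that [ini] turns "apply the change [x']" on
    inputs into "run the derivative on [x'] and apply its output change" on
    (output, cache) pairs; iterating this along the list of changes shows that
    [iter] computes [ini] of the accumulated input, whose first component is
    the denotation.  The only case needing the side condition is [+], whose
    derivative is correct by the interchange law
    [(x + a) + (y + b) = (x + y) + (a + b)] of a commutative semigroup. *)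
From Stdlib Require Import FunctionalExtensionality.

Arguments Cache {K BC A B} i.
Arguments ini {K BC A B} i _.
Arguments der {K BC A B} i _ _.
Arguments consistent {K BC A B} f I.
Arguments unit_incr {K BC A B} f f'.
Arguments to_chg {K BC A} H y.
Arguments to_val {K BC A} H y.
Arguments ecomp {K BC A B C} _ _.
Arguments epar {K BC A B C D} _ _.
Arguments eplus {K BC A} H.
Arguments emap {K BC} s {A B} _.
Arguments ealt {K BC A B C D} _ _.
Arguments efuse {K BC} A.
Arguments edistr {K BC} A B C.

Lemma interchange {T : Type} (op : T -> T -> T)
    (op_assoc : forall x y z, op (op x y) z = op x (op y z))
    (op_comm : forall x y, op x y = op y x) (x y a b : T) :
  op (op x a) (op y b) = op (op x y) (op a b).
Proof.
  rewrite !op_assoc; f_equal.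
  rewrite <- !op_assoc; f_equal.
  apply op_comm.
Qed.

Section Consistency.
Context {K : container} {BC : bcs}.

Lemma oplus_ominus (A : ty K) (x y : val BC A) : oplus x (ominus y x) = y.
Proof.
  induction A; simpl.
  - apply boplus_ominus.
  - apply functional_extensionality; intro i; apply IHA.
  - destruct x, y; simpl; f_equal; auto.
  - destruct x, y; simpl; f_equal; auto.
Qed.

Lemma to_val_to_chg {A : ty K} (H : val BC A = chg BC A) (u : val BC A) :
  to_val H (to_chg H u) = u.
Proof. unfold to_val, to_chg; destruct H; reflexivity. Qed.

Lemma to_chg_to_val {A : ty K} (H : val BC A = chg BC A) (u : chg BC A) :
  to_chg H (to_val H u) = u.
Proof.
  unfold to_val, to_chg; revert u; generalize H.
  generalize (chg BC A); intros T []; reflexivity.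
Qed.

Definition advance {A B : ty K} (I : incr K BC A B) (x' : chg BC A)
    (p : val BC B * Cache I) : val BC B * Cache I :=
  let (y', c') := der I x' (snd p) in (oplus (fst p) y', c').

Lemma consistentP {A B : ty K} {f : val BC A -> val BC B} {I : incr K BC A B} :
  consistent f I <->
  (forall x, fst (ini I x) = f x) /\
  (forall x x', ini I (oplus x x') = advance I x' (ini I x)).
Proof.
  unfold advance; split.
  - intros (Hini & Hval & Hcache); split; [exact Hini|]; intros x x'.
    rewrite (surjective_pairing (ini I (oplus x x'))), Hini, Hval, Hcache, Hini.
    destruct (der I x' (snd (ini I x))); reflexivity.
  - intros [Hini Hstep]; split; [exact Hini|split]; intros x x';
      rewrite <- ?Hini, Hstep; destruct (der I x' (snd (ini I x))); reflexivity.
Qed.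

Lemma iter_cons {A B : ty K} (I : incr K BC A B) x x' xs :
  iter I x (x' :: xs) = advance I x' (iter I x xs).
Proof. simpl; destruct (iter I x xs); reflexivity. Qed.

Lemma iter_consistent {A B : ty K} {f : val BC A -> val BC B} {I : incr K BC A B} :
  consistent f I -> forall x xs, iter I x xs = ini I (sum x xs).
Proof.
  intros [_ Hstep]%consistentP x xs; induction xs as [|x' xs IH]; [reflexivity|].
  rewrite iter_cons, IH; simpl; symmetry; apply Hstep.
Qed.

Lemma consistent_unit_incr {A B : ty K} (f : val BC A -> val BC B) (f' : chg BC A -> chg BC B) :
  (forall x x', f (oplus x x') = oplus (f x) (f' x')) -> consistent f (unit_incr f f').
Proof. intros Hf; split; [|split]; intros; simpl; auto. Qed.

Ltac destruct_pairs :=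
  repeat match goal with
         | |- context [ini ?I ?x] => destruct (ini I x); cbn
         | |- context [der ?I ?x' ?c] => destruct (der I x' c); cbn
         end.

Lemma consistent_ecomp {A B C : ty K} {e1 : expr BC A B} {e2 : expr BC B C} :
  consistent (den e1) (incr_of e1) -> consistent (den e2) (incr_of e2) ->
  consistent (den (ecomp e1 e2)) (incr_of (ecomp e1 e2)).
Proof.
  intros [Hini1 Hstep1]%consistentP [Hini2 Hstep2]%consistentP.
  apply consistentP; split; intros x; simpl.
  - rewrite <- Hini1, <- Hini2; destruct_pairs; reflexivity.
  - intros x'; rewrite Hstep1; unfold advance.
    destruct (ini (incr_of e1) x) as [y c1].
    destruct (ini (incr_of e2) y) as [z c2] eqn:E2; simpl.
    destruct (der (incr_of e1) x' c1) as [y' c1']; simpl.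
    rewrite Hstep2, E2; unfold advance; simpl.
    destruct (der (incr_of e2) y' c2); reflexivity.
Qed.

Lemma consistent_epar {A B C D : ty K} {e1 : expr BC A B} {e2 : expr BC C D} :
  consistent (den e1) (incr_of e1) -> consistent (den e2) (incr_of e2) ->
  consistent (den (epar e1 e2)) (incr_of (epar e1 e2)).
Proof.
  intros [Hini1 Hstep1]%consistentP [Hini2 Hstep2]%consistentP.
  apply consistentP; split; simpl.
  - intros [x1 x2]; rewrite <- Hini1, <- Hini2; destruct_pairs; reflexivity.
  - intros [x1 x2] [x1' x2']; simpl; rewrite Hstep1, Hstep2; unfold advance.
    destruct_pairs; reflexivity.
Qed.

Lemma consistent_emap (s : shape K) {A B : ty K} {e : expr BC A B} :
  consistent (den e) (incr_of e) -> consistent (den (emap s e)) (incr_of (emap s e)).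
Proof.
  intros (Hini & Hval & Hcache); split; [|split]; intros; simpl;
    apply functional_extensionality; auto.
Qed.

Lemma consistent_ealt {A B C D : ty K} {e1 : expr BC A B} {e2 : expr BC C D} :
  consistent (den e1) (incr_of e1) -> consistent (den e2) (incr_of e2) ->
  consistent (den (ealt e1 e2)) (incr_of (ealt e1 e2)).
Proof.
  intros [Hini1 Hstep1]%consistentP [Hini2 Hstep2]%consistentP.
  apply consistentP; split; simpl.
  - intros [x|x]; rewrite <- ?Hini1, <- ?Hini2; destruct_pairs; reflexivity.
  - intros [x|x] x'; unfold advance; cbn.
    + destruct (ini (incr_of e1) x) as [y c] eqn:E.
      destruct x'; cbn; rewrite ?Hstep1, ?E; unfold advance; cbn;
        destruct_pairs; rewrite ?oplus_ominus; reflexivity.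
    + destruct (ini (incr_of e2) x) as [y c] eqn:E.
      destruct x'; cbn; rewrite ?Hstep2, ?E; unfold advance; cbn;
        destruct_pairs; rewrite ?oplus_ominus; reflexivity.
Qed.

Lemma consistent_efuse (A : ty K) :
  consistent (den (efuse (BC := BC) A)) (incr_of (efuse A)).
Proof.
  apply consistentP; split; [intros [x|x]; reflexivity|].
  intros [x|x] [x'|x'|x'|x'|]; unfold advance; cbn; rewrite ?oplus_ominus; reflexivity.
Qed.

Lemma consistent_edistr (A B C : ty K) :
  consistent (den (edistr (BC := BC) A B C)) (incr_of (edistr A B C)).
Proof.
  apply consistentP; split; [intros [a [b|b]]; reflexivity|].
  intros [a [b|b]] [a' [b'|b'|b'|b'|]]; unfold advance; cbn; rewrite ?oplus_ominus;
    reflexivity.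
Qed.

Lemma consistent_eplus {A : ty K} {H : val BC A = chg BC A} :
  wf (eplus H) -> consistent (den (eplus H)) (incr_of (eplus H)).
Proof.
  intros [Hassoc Hcomm]; apply consistent_unit_incr; intros [x y] [u v]; simpl.
  rewrite <- (to_chg_to_val H u), <- (to_chg_to_val H v), !to_val_to_chg.
  apply (interchange (fun a b => oplus a (to_chg H b)) Hassoc Hcomm).
Qed.

Lemma incr_of_consistent {A B : ty K} (e : expr BC A B) :
  wf e -> consistent (den e) (incr_of e).
Proof.
  induction e; intros W; try solve [apply consistent_unit_incr; reflexivity].
  - exact (consistent_ecomp (IHe1 (proj1 W)) (IHe2 (proj2 W))).
  - exact (consistent_epar (IHe1 (proj1 W)) (IHe2 (proj2 W))).
  - apply consistent_unit_incr; intros; symmetry; apply oplus_ominus.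
  - exact (consistent_eplus W).
  - apply op_consistent.
  - exact (consistent_emap s (IHe W)).
  - apply consistent_unit_incr; intros; apply functional_extensionality; intro j.
    simpl; destruct (pos_eqdec K s i j); reflexivity.
  - apply consistent_unit_incr; intros; apply functional_extensionality; intro j.
    simpl; destruct (p j); reflexivity.
  - apply consistent_efuse.
  - apply consistent_edistr.
  - exact (consistent_ealt (IHe1 (proj1 W)) (IHe2 (proj2 W))).
Qed.

End Consistency.

Theorem theorem5p6 (K : container) (BC : bcs) (A B : ty K) (e : expr BC A B)
  (He : wf e) (x : val BC A) (xs : list (chg BC A)) :
  fst (iter (incr_of e) x xs) = den e (sum x xs).
Proof.
  pose proof (incr_of_consistent e He) as Hcons.
  rewrite (iter_consistent Hcons).
  apply (proj1 Hcons).
Qed.
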